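(* Let $\Phi:\ell^\infty(\mathbb Z)\to\ell^\infty(\mathbb Z)$ be a linear map commuting with the backward shift $B$, $(Bv)_n=v_{n+1}$. If $\Phi$ is weak*-continuous and idempotent ($\Phi\circ\Phi=\Phi$), then $\Phi$ is either the identity map or $0$.
   Context: The weak*-topology on $\ell^\infty(\mathbb Z)$ is the one coming from $\ell^\infty(\mathbb Z)=\ell^1(\mathbb Z)^*$. *)

From HB Require Import structures.
From mathcomp Require Import all_boot all_order all_algebra.
From mathcomp Require Import all_classical all_reals all_analysis.
Set Implicit Arguments. Unset Strict Implicit. Unset Printing Implicit Defensive.
Import Order.TTheory GRing.Theory Num.Theory.
Import numFieldNormedType.Exports.
Local Open Scope ring_scope.
Local Open Scope classical_set_scope.

Definition linf (R : realType) (v : int -> R) : Prop :=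
  exists M : R, forall n : int, `|v n| <= M.

Definition l1 (R : realType) (a : int -> R) : Prop :=
  exists M : R, forall N : nat,
    \sum_(k < N) (`|a (k%:Z)| + `|a (- (k.+1)%:Z)|) <= M.

(* Partial sums over -N <= n < N (indices k and -(k+1)) of v_n a_n. *)
Definition pair_partial (R : realType) (v a : int -> R) (N : nat) : R :=
  \sum_(k < N) (v (k%:Z) * a (k%:Z) + v (- (k.+1)%:Z) * a (- (k.+1)%:Z)).

(* Duality pairing <v, a> = sum_{n in Z} v_n a_n (absolutely convergent when
   v in l^infty and a in l^1). *)
Definition dpair (R : realType) (v a : int -> R) : R :=
  limn (pair_partial v a).

(* Weak*-open subsets of l^infty(Z) = l^1(Z)^*: U is contained in l^infty and
   every point of U has a basic weak*-neighbourhood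
   { w | |<w - v, a_i>| < e, i < k } (a_i in l^1, e > 0) contained in U. *)
Definition wstar_open (R : realType) (U : set (int -> R)) : Prop :=
  U `<=` linf (R:=R) /\
  forall v, U v ->
    exists (k : nat) (A : 'I_k -> (int -> R)) (e : R),
      0 < e /\ (forall i, l1 (A i)) /\
      forall w, linf w ->
        (forall i, `|dpair (fun n => w n - v n) (A i)| < e) -> U w.

(* Phi : l^infty -> l^infty (given as a function defined on all sequences,
   only its values on l^infty matter) is weak*-continuous: preimages (in
   l^infty) of weak*-open sets are weak*-open. *)
Definition wstar_continuous (R : realType) (Phi : (int -> R) -> (int -> R))
  : Prop :=
  forall U, wstar_open U -> wstar_open (fun v => linf v /\ U (Phi v)).

Definition bshift (R : realType) (v : int -> R) : int -> R :=
  fun n => v (n + 1).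

(* Shift-equivariance makes, for 0 < t < pi, the plane spanned by n |-> cos (n t)
   and n |-> sin (n t) invariant under Phi, which acts on it as multiplication by
   a complex number a + i b; idempotence forces a + i b to be 0 or 1.  On bounded
   sets, weak*-convergence is implied by uniform closeness on a finite window of
   coordinates, so this eigenvalue is locally constant in t, hence a constant s.
   Averaging cos ((n - m) t) over the nodes t = (2j+1) pi / (2N), j < N, gives a
   bounded sequence equal to delta_m for |n - m| < 2N; by continuity every delta_m,
   and then (through its truncations) every bounded v, satisfies Phi v = s v. *)

From Pilot Require Import Defs.
From mathcomp Require Import all_boot all_order all_algebra.
From mathcomp Require Import all_classical all_reals all_analysis.
From mathcomp Require Import ring lra zify.
Set Implicit Arguments. Unset Strict Implicit. Unset Printing Implicit Defensive.
Import Order.TTheory GRing.Theory Num.Theory.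
Import numFieldNormedType.Exports.
Local Open Scope ring_scope.
Local Open Scope classical_set_scope.

Definition window (K : nat) (n : int) : bool := - K%:Z <= n < K%:Z.

Lemma window_monotone (K K' : nat) (n : int) :
  (K <= K')%N -> window K n -> window K' n.
Proof. by rewrite /window => ? /andP[? ?]; apply/andP; split; lia. Qed.

Lemma window_succ K m : window K.+1 m -> [\/ window K m, m = K%:Z | m = - K.+1%:Z].
Proof.
rewrite /window => /andP[m1 m2].
case: (boolP (window K m)) => [|/nandP[]]; rewrite /window; first by constructor.
- by move=> mK; constructor 3; lia.
- by move=> mK; constructor 2; lia.
Qed.

Section Pairing.
Variable R : realType.
Implicit Types (a g x : int -> R).

Definition l1_term g (k : nat) : R := `|g k%:Z| + `|g (- k.+1%:Z)|.

Definition pair_term x a (k : nat) : R :=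
  x k%:Z * a k%:Z + x (- k.+1%:Z) * a (- k.+1%:Z).

Lemma pair_partial_series x a : pair_partial x a = series (pair_term x a).
Proof. by apply/funext => N; rewrite /series /= big_mkord. Qed.

Lemma l1_tail g : l1 g -> forall e, 0 < e ->
  exists K : nat, forall N, \sum_(K <= k < N) l1_term g k <= e.
Proof.
move=> [L HL] e e0.
pose E := range (fun N => \sum_(0 <= k < N) l1_term g k).
have supE : has_sup E.
  split; first by exists 0; exists 0%N => //; rewrite big_geq.
  by exists L => _ [N _ <-]; rewrite big_mkord; exact: HL.
have [_ [K _ <-] HK] := sup_adherent e0 supE.
exists K => N; case: (leqP N K) => [NK | /ltnW KN]; first by rewrite big_geq ?ltW.
have : \sum_(0 <= k < N) l1_term g k <= sup E by apply: sup_upper_bound => //; exists N.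
by rewrite (big_cat_nat (n:=K)) //=; lra.
Qed.

Lemma norm_dpair_le x a (B : R) :
  (forall N, \sum_(0 <= k < N) `|pair_term x a k| <= B) -> `|Defs.dpair x a| <= B.
Proof.
move=> HB.
have partial_le N : - B <= series (pair_term x a) N <= B.
  by rewrite -ler_norml; apply: le_trans (HB N); exact: ler_norm_sum.
have cv : cvgn (series (pair_term x a)).
  apply: normed_cvg; apply: nondecreasing_is_cvgn.
    by apply: (nondecreasing_series (P := xpredT)) => k _ _; exact: normr_ge0.
  by exists B => _ [N _ <-]; exact: HB.
rewrite /Defs.dpair pair_partial_series ler_norml; apply/andP; split.
- by apply: limr_ge => //; apply: nearW => N; have /andP[] := partial_le N.
- by apply: limr_le => //; apply: nearW => N; have /andP[] := partial_le N.
Qed.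

Lemma norm_pair_term_le x a g (b : R) k :
  (forall m, `|a m| <= `|g m|) -> `|x k%:Z| <= b -> `|x (- k.+1%:Z)| <= b ->
  `|pair_term x a k| <= b * l1_term g k.
Proof.
move=> ag xk xk'; rewrite mulrDr; apply: le_trans (ler_normD _ _) _.
by rewrite !normrM; apply: lerD; apply: ler_pM.
Qed.

Lemma norm_dpair_window_le x a g K (eta M L t : R) :
  (forall N, \sum_(0 <= k < N) l1_term g k <= L) ->
  (forall N, \sum_(K <= k < N) l1_term g k <= t) ->
  (forall m, `|a m| <= `|g m|) -> 0 <= eta -> (forall m, `|x m| <= M) ->
  (forall m, window K m -> `|x m| <= eta) ->
  `|Defs.dpair x a| <= eta * L + M * t.
Proof.
move=> gL gt ag eta0 xM xK.
have M0 : 0 <= M := le_trans (normr_ge0 _) (xM 0).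
have t0 : 0 <= t by apply: le_trans (gt K); rewrite big_geq.
have head_le N : (N <= K)%N -> \sum_(0 <= k < N) `|pair_term x a k| <= eta * L.
  move=> NK; apply: le_trans (ler_wpM2l eta0 (gL N)); rewrite mulr_sumr.
  apply: ler_sum_nat => k /andP[_ kN].
  by apply: norm_pair_term_le => //; apply: xK; rewrite /window; lia.
apply: norm_dpair_le => N; case: (leqP N K) => [NK | /ltnW KN].
  by rewrite -[X in X <= _]addr0 lerD ?head_le // mulr_ge0.
rewrite (big_cat_nat (n := K)) //= lerD ?head_le //.
apply: le_trans (ler_wpM2l M0 (gt N)); rewrite mulr_sumr.
by apply: ler_sum_nat => k _; apply: norm_pair_term_le.
Qed.

Lemma dpair_small_on_window g (e M : R) : l1 g -> 0 < e -> 0 <= M ->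
  exists K eta, 0 < eta /\ forall x a, (forall m, `|a m| <= `|g m|) ->
    (forall m, `|x m| <= M) -> (forall m, window K m -> `|x m| <= eta) ->
    `|Defs.dpair x a| < e.
Proof.
move=> gl1 e0 M0; have [L gL] := gl1.
have {}gL N : \sum_(0 <= k < N) l1_term g k <= L by rewrite big_mkord; exact: gL.
have L0 : 0 <= L by apply: le_trans (gL 0%N); rewrite big_geq.
have t0 : 0 < e / (4 * (M + 1)) by rewrite divr_gt0 // mulr_gt0 //; lra.
have [K gt] := l1_tail gl1 t0.
exists K, (e / (4 * (L + 1))); split; first by rewrite divr_gt0 // mulr_gt0 //; lra.
move=> x a ag xM xK; apply: le_lt_trans (norm_dpair_window_le gL gt ag _ xM xK) _.
  by rewrite divr_ge0 ?mulr_ge0 //; lra.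
have -> : e / (4 * (L + 1)) * L + M * (e / (4 * (M + 1)))
        = e / 4 * (L / (L + 1) + M / (M + 1)) by field; lra.
have : L / (L + 1) < 1 by rewrite ltr_pdivrMr; lra.
have : M / (M + 1) < 1 by rewrite ltr_pdivrMr; lra.
nra.
Qed.

Definition delta (n : int) : int -> R := fun m => (m == n)%:R.

Lemma pair_partial_delta x n N :
  pair_partial x (delta n) N = if window N n then x n else 0.
Proof.
elim: N => [|N IH]; first by rewrite /pair_partial big_ord0 /window; case: ifP => //; lia.
rewrite /pair_partial big_ord_recr /= -/(pair_partial _ _ _) IH /delta /window.
by case: ifP => h1; case: ifP => h2; case: eqVneq => h3; case: eqVneq => h4;
  first [exfalso; lia | subst; rewrite ?mulr1 ?mulr0 ?addr0 ?add0r].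
Qed.

Lemma dpair_delta x n : Defs.dpair x (delta n) = x n.
Proof.
rewrite /Defs.dpair; apply: cvg_lim => //; apply: cvg_near_cst.
near=> N; rewrite pair_partial_delta ifT //.
have : (`|n|%N < N)%N by near: N; exact: nbhs_infty_gt.
by rewrite /window; lia.
Unshelve. all: by end_near.
Qed.

Lemma l1_delta n : l1 (delta n).
Proof.
exists 1 => N; have -> : \sum_(k < N) l1_term (delta n) k = pair_partial (fun=> 1) (delta n) N.
  by apply: eq_bigr => k _; rewrite /l1_term /delta !normr_nat !mul1r.
by rewrite pair_partial_delta; case: ifP.
Qed.

Lemma norm_delta_le1 n m : `|delta n m| <= 1.
Proof. by rewrite /delta normr_nat lern1 leq_b1. Qed.

Lemma linf_delta n : linf (delta n).
Proof. by exists 1; exact: norm_delta_le1. Qed.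

Lemma l1_sum_norm k (A : 'I_k -> int -> R) :
  (forall i, l1 (A i)) -> l1 (fun m => \sum_(i < k) `|A i m|).
Proof.
move=> /fin_all_exists [L AL]; exists (\sum_(i < k) L i) => N.
under eq_bigr => j _ do rewrite !ger0_norm ?sumr_ge0 // -big_split.
by rewrite exchange_big /=; apply: ler_sum => i _; exact: AL.
Qed.
End Pairing.

Arguments delta {R} n m.

Lemma wstar_open_coord_ball (R : realType) (n : int) (c eps : R) :
  wstar_open (fun w => linf w /\ `|w n - c| < eps).
Proof.
split=> [w [] //|w0 [lw0 w0n]].
exists 1%N, (fun=> delta n), (eps - `|w0 n - c|); split; first by rewrite subr_gt0.
split=> [_|w lw /(_ ord0)]; first exact: l1_delta.
rewrite dpair_delta => wn; split => //.
by rewrite -(subrKA (w0 n)); apply: le_lt_trans (ler_normD _ _) _; lra.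
Qed.

Section Continuity.
Variables (R : realType) (Phi : (int -> R) -> (int -> R)).
Hypothesis Hmaps : forall v, linf v -> linf (Phi v).
Hypothesis Hcont : wstar_continuous Phi.

Lemma Phi_coord_continuous v n (eps M : R) : linf v -> 0 < eps -> 0 <= M ->
  exists K eta, 0 < eta /\ forall w, linf w -> (forall m, `|w m - v m| <= M) ->
    (forall m, window K m -> `|w m - v m| <= eta) -> `|Phi w n - Phi v n| < eps.
Proof.
move=> lv eps0 M0.
have [_ /(_ v) []] := Hcont (wstar_open_coord_ball n (Phi v n) eps).
  by split=> //; split; [exact: Hmaps | rewrite subrr normr0].
move=> k [A [e [e0 [A1 HA]]]].
have Ag i m : `|A i m| <= `|\sum_(j < k) `|A j m| |.
  by rewrite [X in _ <= X]ger0_norm ?sumr_ge0 // (bigD1 i) //= lerDl sumr_ge0.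
have [K [eta [eta0 small]]] := dpair_small_on_window (l1_sum_norm A1) e0 M0.
exists K, eta; split => // w lw wM wK.
by have [_ [_]] := HA w lw (fun i => small _ _ (Ag i) wM wK).
Qed.
End Continuity.

Lemma recurrence_eq0 (R : pzRingType) (x : int -> R) (c : R) :
  (forall n, x (n + 1) + x (n - 1) = c * x n) -> x 0 = 0 -> x 1 = 0 ->
  forall n, x n = 0.
Proof.
move=> rec x0 x1.
have up (k : nat) : x k%:Z = 0 /\ x (k%:Z + 1) = 0.
  elim: k => [|k [xk xk1]]; first by [].
  rewrite -addn1 PoszD; split => //.
  by have := rec (k%:Z + 1); rewrite addrK xk xk1 mulr0 addr0.
have down (k : nat) : x (- k%:Z) = 0 /\ x (- k%:Z + 1) = 0.
  elim: k => [|k [xk xk1]]; first by [].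
  rewrite -addn1 PoszD opprD subrK; split => //.
  by have := rec (- k%:Z); rewrite xk xk1 mulr0 add0r.
by case=> k; [case: (up k) | rewrite NegzE; case: (down k.+1)].
Qed.

Section TrigSequences.
Variable R : realType.

Definition cosseq (t : R) : int -> R := fun n => cos (n%:~R * t).
Definition sinseq (t : R) : int -> R := fun n => sin (n%:~R * t).

Lemma cosseqD1 t n : cosseq t (n + 1) = cos t * cosseq t n - sin t * sinseq t n.
Proof. by rewrite /cosseq /sinseq intrD1 mulrDl mul1r cosD; ring. Qed.

Lemma sinseqD1 t n : sinseq t (n + 1) = sin t * cosseq t n + cos t * sinseq t n.
Proof. by rewrite /cosseq /sinseq intrD1 mulrDl mul1r sinD; ring. Qed.

Lemma cosseqB1 t n : cosseq t (n - 1) = cos t * cosseq t n + sin t * sinseq t n.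
Proof. by rewrite /cosseq /sinseq intrB mulrBl mul1r cosB; ring. Qed.

Lemma sinseqB1 t n : sinseq t (n - 1) = cos t * sinseq t n - sin t * cosseq t n.
Proof. by rewrite /cosseq /sinseq intrB mulrBl mul1r sinB; ring. Qed.

Lemma cosseq0 t : cosseq t 0 = 1. Proof. by rewrite /cosseq mul0r cos0. Qed.
Lemma sinseq0 t : sinseq t 0 = 0. Proof. by rewrite /sinseq mul0r sin0. Qed.
Lemma cosseq1 t : cosseq t 1 = cos t. Proof. by rewrite /cosseq mul1r. Qed.
Lemma sinseq1 t : sinseq t 1 = sin t. Proof. by rewrite /sinseq mul1r. Qed.

Lemma linf_cosseq t : linf (cosseq t).
Proof. by exists 1 => n; exact: cos_max. Qed.

Lemma linf_sinseq t : linf (sinseq t).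
Proof. by exists 1 => n; exact: sin_max. Qed.

Lemma cosseq_sinseq_free t (p q : R) : sin t != 0 ->
  (forall n, p * cosseq t n + q * sinseq t n = 0) -> p = 0 /\ q = 0.
Proof.
move=> st0 pq0; have := pq0 0; rewrite cosseq0 sinseq0 mulr1 mulr0 addr0 => p0.
have := pq0 1; rewrite p0 mul0r add0r sinseq1 => /eqP.
by rewrite mulf_eq0 (negbTE st0) orbF => /eqP.
Qed.
End TrigSequences.

Lemma idem_complex_real (R : realFieldType) (a b : R) :
  a * a - b * b = a -> 2 * a * b = b -> b = 0 /\ (a = 0 \/ a = 1).
Proof.
move=> re im; have b0 : b = 0.
  have /eqP : (2 * a - 1) * b = 0 by rewrite mulrBl im mul1r subrr.
  rewrite mulf_eq0 => /orP[/eqP a_half | /eqP //].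
  have : b * b = - 1 / 4 by rewrite (_ : a = 1 / 2) in re; lra.
  by have := sqr_ge0 b; rewrite expr2; lra.
split => //; move: re; rewrite b0 mulr0 subr0 => /eqP.
by rewrite -subr_eq0 -[X in _ - X]mulr1 -mulrBr mulf_eq0 subr_eq0 => /orP[] /eqP; [left|right].
Qed.

Definition eigenvector (R : realType) (Phi : (int -> R) -> (int -> R)) (s : R)
  (v : int -> R) : Prop :=
  linf v /\ Phi v = (fun n => s * v n).

Lemma linf_comb (R : realType) (c : R) (v w : int -> R) : linf v -> linf w ->
  linf (fun n => c * v n + w n).
Proof.
move=> [M vM] [N wN]; exists (`|c| * M + N) => n.
by apply: le_trans (ler_normD _ _) _; rewrite normrM lerD ?ler_wpM2l.
Qed.

Lemma linf0 (R : realType) : linf (fun=> 0 : R).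
Proof. by exists 0 => n; rewrite normr0. Qed.

Lemma linf_scale (R : realType) (c : R) (v : int -> R) : linf v -> linf (fun n => c * v n).
Proof. by move=> [M vM]; exists (`|c| * M) => n; rewrite normrM ler_wpM2l. Qed.

Section LinearMaps.
Variables (R : realType) (Phi : (int -> R) -> (int -> R)).
Hypothesis Hlin : forall (c : R) v w, linf v -> linf w ->
  Phi (fun n => c * v n + w n) = (fun n => c * Phi v n + Phi w n).

Lemma linear_Phi0 : Phi (fun=> 0) = fun=> 0.
Proof.
have E := Hlin (-1) (@linf0 R) (@linf0 R).
rewrite (_ : (fun=> -1 * 0 + 0) = fun=> 0) in E; last by apply/funext => n; rewrite mulr0 addr0.
by rewrite E; apply/funext => n; rewrite mulN1r addNr.
Qed.

Lemma linear_PhiZ (c : R) v : linf v -> Phi (fun n => c * v n) = fun n => c * Phi v n.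
Proof.
move=> lv; have := Hlin c lv (@linf0 R); rewrite linear_Phi0.
under [in X in X = _ -> _]eq_fun do rewrite addr0.
by move=> ->; apply/funext => n; rewrite addr0.
Qed.

Lemma linear_PhiD2 (a b : R) v w : linf v -> linf w ->
  Phi (fun n => a * v n + b * w n) = fun n => a * Phi v n + b * Phi w n.
Proof. by move=> lv lw; rewrite Hlin ?(linear_PhiZ _ lw) //; exact: linf_scale. Qed.

Lemma eigenvector0 s : eigenvector Phi s (fun=> 0).
Proof. by split; [exact: linf0 | rewrite linear_Phi0; apply/funext => n; rewrite mulr0]. Qed.

Lemma eigenvector_comb s (c : R) v w : eigenvector Phi s v -> eigenvector Phi s w ->
  eigenvector Phi s (fun n => c * v n + w n).
Proof.
move=> [lv Pv] [lw Pw]; split; first exact: linf_comb.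
by rewrite Hlin // Pv Pw; apply/funext => n; ring.
Qed.

Lemma eigenvector_sum s N (f : nat -> int -> R) :
  (forall j, (j < N)%N -> eigenvector Phi s (f j)) ->
  eigenvector Phi s (fun n => \sum_(j < N) f j n).
Proof.
elim: N => [_|N IH fE].
  by under eq_fun do rewrite big_ord0; exact: eigenvector0.
under eq_fun do rewrite big_ord_recr /= addrC -[X in X + _]mul1r.
apply: eigenvector_comb; first exact: fE.
by apply: IH => j jN; apply: fE; exact: ltnW.
Qed.
End LinearMaps.

Definition fshift (R : realType) (v : int -> R) : int -> R := fun n => v (n - 1).

Section ShiftEquivariant.
Variables (R : realType) (Phi : (int -> R) -> (int -> R)).
Hypothesis Hlin : forall (c : R) v w, linf v -> linf w ->
  Phi (fun n => c * v n + w n) = (fun n => c * Phi v n + Phi w n).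
Hypothesis Hshift : forall v, linf v -> Phi (bshift v) = bshift (Phi v).

Lemma Phi_fshift v : linf v -> Phi (fshift v) = fshift (Phi v).
Proof.
move=> [M vM]; have lfv : linf (fshift v) by exists M => n; exact: vM.
have bfv : bshift (fshift v) = v by apply/funext => n; rewrite /bshift /fshift addrK.
have := Hshift lfv; rewrite bfv => ->.
by apply/funext => n; rewrite /bshift /fshift subrK.
Qed.

Lemma Phi_cosseq_shift t n :
  Phi (cosseq t) (n + 1) = cos t * Phi (cosseq t) n - sin t * Phi (sinseq t) n /\
  Phi (cosseq t) (n - 1) = cos t * Phi (cosseq t) n + sin t * Phi (sinseq t) n.
Proof.
have lC := linf_cosseq t; have lS := linf_sinseq t.
have bC : bshift (cosseq t) = fun n => cos t * cosseq t n + (- sin t) * sinseq t n.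
  by apply/funext => m; rewrite /bshift cosseqD1 mulNr.
have fC : fshift (cosseq t) = fun n => cos t * cosseq t n + sin t * sinseq t n.
  by apply/funext => m; rewrite /fshift cosseqB1.
split.
- have := Hshift lC; rewrite bC linear_PhiD2 // => /(congr1 (fun f => f n)) /=.
  by rewrite /bshift mulNr => <-.
- have := Phi_fshift lC; rewrite fC linear_PhiD2 // => /(congr1 (fun f => f n)) /=.
  by rewrite /fshift => <-.
Qed.

Lemma Phi_cosseq_sinseq t : sin t != 0 -> exists a b,
  Phi (cosseq t) = (fun n => a * cosseq t n + b * sinseq t n) /\
  Phi (sinseq t) = (fun n => a * sinseq t n - b * cosseq t n).
Proof.
move=> st0; set w := Phi (cosseq t); set u := Phi (sinseq t).
pose a := w 0; pose b := (w 1 - a * cos t) / sin t.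
have wE : w = fun n => a * cosseq t n + b * sinseq t n.
  pose d n := w n - (a * cosseq t n + b * sinseq t n).
  have d_rec n : d (n + 1) + d (n - 1) = 2 * cos t * d n.
    have [up down] := Phi_cosseq_shift t n; rewrite -/w -/u in up down.
    by rewrite /d up down cosseqD1 sinseqD1 cosseqB1 sinseqB1; ring.
  have d0 : d 0 = 0 by rewrite /d cosseq0 sinseq0 /a; ring.
  have d1 : d 1 = 0 by rewrite /d cosseq1 sinseq1 /b; field.
  by apply/funext => n; apply/eqP; rewrite -subr_eq0 -/(d n) (recurrence_eq0 d_rec d0 d1).
exists a, b; split => //; apply/funext => n.
have [up _] := Phi_cosseq_shift t n; rewrite -/w -/u in up.
apply: (mulfI st0); have -> : sin t * u n = cos t * w n - w (n + 1) by rewrite up; ring.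
by rewrite wE cosseqD1 sinseqD1; ring.
Qed.

Hypothesis Hidem : forall v, linf v -> Phi (Phi v) = Phi v.

Lemma trig_eigenvector t : sin t != 0 -> exists z, (z = 0 \/ z = 1) /\
  eigenvector Phi z (cosseq t) /\ eigenvector Phi z (sinseq t).
Proof.
move=> st0; have lC := linf_cosseq t; have lS := linf_sinseq t.
have [a [b [PC PS]]] := Phi_cosseq_sinseq st0.
have PPC : Phi (Phi (cosseq t)) =
    fun n => (a * a - b * b) * cosseq t n + (2 * a * b) * sinseq t n.
  by rewrite [in LHS]PC linear_PhiD2 // PC PS; apply/funext => n; ring.
have [re im] : a * a - b * b - a = 0 /\ 2 * a * b - b = 0.
  apply: (cosseq_sinseq_free st0) => n.
  have := congr1 (fun f => f n) (Hidem lC); rewrite PPC PC /= => idem.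
  by rewrite -(subrr (a * cosseq t n + b * sinseq t n)) -[X in _ = X - _]idem; ring.
have [b0 a01] := idem_complex_real (subr0_eq re) (subr0_eq im).
exists a; rewrite b0 in PC PS; split; [by [] | split; split => //].
- by rewrite PC; apply/funext => n; ring.
- by rewrite PS; apply/funext => n; ring.
Qed.
End ShiftEquivariant.

Lemma near_window (T : Type) (F : set_system T) (FF : Filter F) K (P : int -> T -> Prop) :
  (forall m, \forall x \near F, P m x) ->
  \forall x \near F, forall m, window K m -> P m x.
Proof.
move=> PF; elim: K => [|K IH]; first by apply: nearW => x m; rewrite /window; lia.
near=> x => m /window_succ[mK | -> | ->]; last 2 first.
- by near: x; exact: PF.
- by near: x; exact: PF.
- by move: m mK; near: x; exact: IH.
Unshelve. all: by end_near.
Qed.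

Lemma cosseq_near (R : realType) (t0 eta : R) m : 0 < eta ->
  \forall t \near t0, `|cosseq t m - cosseq t0 m| <= eta.
Proof.
move=> eta0; have : (fun t => cos (m%:~R * t)) @ t0 --> cos (m%:~R * t0).
  by apply: continuous_comp; [exact: mulrl_continuous | exact: continuous_cos].
by move/cvgrPdist_le => /(_ eta eta0); apply: filterS => t; rewrite distrC.
Qed.

Section EigenvalueConstant.
Variables (R : realType) (Phi : (int -> R) -> (int -> R)).
Hypothesis Hmaps : forall v, linf v -> linf (Phi v).
Hypothesis Hlin : forall (c : R) v w, linf v -> linf w ->
  Phi (fun n => c * v n + w n) = (fun n => c * Phi v n + Phi w n).
Hypothesis Hshift : forall v, linf v -> Phi (bshift v) = bshift (Phi v).
Hypothesis Hcont : wstar_continuous Phi.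
Hypothesis Hidem : forall v, linf v -> Phi (Phi v) = Phi v.

Definition trig_eigenvalue (t : R) : R := Phi (cosseq t) 0.

Lemma trig_eigenvalueP t : 0 < t < pi ->
  (trig_eigenvalue t = 0 \/ trig_eigenvalue t = 1) /\
  eigenvector Phi (trig_eigenvalue t) (cosseq t) /\
  eigenvector Phi (trig_eigenvalue t) (sinseq t).
Proof.
move=> /sin_gt0_pi/lt0r_neq0 st0.
have [z [z01 [[lC PC] eS]]] := trig_eigenvector Hlin Hshift Hidem st0.
by have -> : trig_eigenvalue t = z by rewrite /trig_eigenvalue PC cosseq0 mulr1.
Qed.

Lemma trig_eigenvalue_near t0 : 0 < t0 < pi ->
  \forall t \near t0, trig_eigenvalue t = trig_eigenvalue t0.
Proof.
move=> t0_in; have [z01 _] := trig_eigenvalueP t0_in.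
have half_gt0 : (0 : R) < 1 / 2 by lra.
have [K [eta [eta0 PhiK]]] :=
  Phi_coord_continuous Hmaps Hcont 0 (linf_cosseq t0) half_gt0 (ler0n R 2).
near=> t.
have t_in : 0 < t < pi.
  suff : t \in `]0, pi[%R by rewrite in_itv /=.
  by near: t; apply: near_in_itvoo; rewrite in_itv.
have [zt01 _] := trig_eigenvalueP t_in.
have : `|trig_eigenvalue t - trig_eigenvalue t0| < 1 / 2.
  apply: PhiK; first exact: linf_cosseq.
    move=> m; apply: le_trans (ler_normB _ _) _.
    by have := cos_max (m%:~R * t); have := cos_max (m%:~R * t0); rewrite /cosseq; lra.
  by near: t; apply: near_window => m; exact: cosseq_near.
by rewrite ltr_norml; case: zt01 => ->; case: z01 => ->; lra.
Unshelve. all: by end_near.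
Qed.

Lemma trig_eigenvalue_const a b : 0 < a < pi -> 0 < b < pi ->
  trig_eigenvalue a = trig_eigenvalue b.
Proof.
wlog ab : a b / a <= b.
  by move=> H a_in b_in; case: (leP a b) => [|/ltW] ?; [exact: H | symmetry; exact: H].
move=> a_in b_in; have in_0pi c : c \in `[a, b]%R -> 0 < c < pi.
  by rewrite in_itv /= => /andP[? ?]; lra.
have zcont : {within `[a, b], continuous trig_eigenvalue}.
  apply: continuous_in_subspaceT => c /set_mem /in_0pi c_in.
  by apply: cvg_near_cst; exact: trig_eigenvalue_near.
have [za01 _] := trig_eigenvalueP a_in; have [zb01 _] := trig_eigenvalueP b_in.
apply/eqP; apply: contraT => zab.
have [|c /in_0pi c_in zc] := IVT (v := 1 / 2) ab zcont.
  have h0 : (0 : R) <= 1 / 2 by lra.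
  have h1 : (1 / 2 : R) <= 1 by lra.
  by rewrite ge_min le_max; case: za01 zb01 zab => -> [] ->; rewrite ?eqxx ?h0 ?h1 ?orbT.
by have [[] + _] := trig_eigenvalueP c_in; rewrite zc; lra.
Qed.
End EigenvalueConstant.

Section DiscreteOrthogonality.
Variable R : realType.

Lemma sin_intpi (d : int) : sin (d%:~R * pi) = 0 :> R.
Proof.
have sin_natpi (k : nat) : sin (k%:R * pi) = 0 :> R.
  by rewrite mulr_natl -[pi *+ k]add0r (alternatingn (@sinDpi R)) sin0 mulr0.
by case: d => k; rewrite ?NegzE ?mulrNz ?mulNr ?sinN sin_natpi ?oppr0.
Qed.

Lemma sin_mul_sum_cos_odd (x : R) N :
  2 * sin x * \sum_(j < N) cos ((2 * j%:R + 1) * x) = sin (2 * N%:R * x).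
Proof.
elim: N => [|N IH]; first by rewrite big_ord0 !mulr0 mul0r sin0.
rewrite big_ord_recr /= mulrDr IH -[N.+1%:R]natr1.
have -> : 2 * N%:R * x = (2 * N%:R + 1) * x - x by ring.
have -> : 2 * (N%:R + 1) * x = (2 * N%:R + 1) * x + x by ring.
by rewrite sinB sinD; ring.
Qed.

Lemma sin_neq0 (x : R) : 0 < `|x| < pi -> sin x != 0.
Proof.
case: (ltrgt0P x) => _; last by rewrite ltxx.
- by move=> /sin_gt0_pi/lt0r_neq0.
- by move=> /sin_gt0_pi; rewrite sinN oppr_gt0 => /ltr0_neq0.
Qed.

Definition node (N j : nat) : R := (2 * j%:R + 1) * pi / (2 * N%:R).

Lemma node_in N j : (j < N)%N -> 0 < node N j < pi.
Proof.
move=> jN; have N0 : (0 : R) < N%:R by rewrite ltr0n; lia.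
have jN' : (j%:R : R) + 1 <= N%:R by rewrite natr1 ler_nat.
have q0 : 0 < (2 * j%:R + 1) / (2 * N%:R) :> R by rewrite divr_gt0 //; lra.
have q1 : (2 * j%:R + 1) / (2 * N%:R) < 1 :> R by rewrite ltr_pdivrMr; lra.
have := @pi_gt0 R; rewrite /node mulrAC; nra.
Qed.

Definition cos_mean (N : nat) (d : int) : R :=
  N%:R^-1 * \sum_(j < N) cos (d%:~R * node N j).

Lemma cos_mean_small (N : nat) (d : int) : (0 < N)%N -> (`|d| < 2 * N)%N ->
  cos_mean N d = (d == 0)%:R.
Proof.
move=> N0 dN; have N0' : (N%:R : R) != 0 by rewrite pnatr_eq0 -lt0n.
rewrite /cos_mean; case: eqVneq => [->|d0].
  under eq_bigr do rewrite mul0r cos0.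
  by rewrite sumr_const card_ord -mulr_natl mulr1 mulVf.
pose x : R := d%:~R * pi / (2 * N%:R).
rewrite (eq_bigr (fun j : 'I_N => cos ((2 * j%:R + 1) * x))); last first.
  by move=> j _; rewrite /node /x; congr cos; ring.
have c0 : 0 < pi / (2 * N%:R) :> R by rewrite divr_gt0 ?pi_gt0 // mulr_gt0 // ltr0n.
have x_in : 0 < `|x| < pi.
  have d_gt0 : 0 < `|d%:~R| :> R by rewrite normr_gt0 intr_eq0.
  have d_lt : `|d%:~R| < 2 * N%:R :> R by rewrite -intr_norm -abszE -natrM ltr_nat.
  have c_pi : pi / (2 * N%:R) * (2 * N%:R) = pi :> R by field.
  rewrite /x -mulrA normrM (gtr0_norm c0); apply/andP; split; first exact: mulr_gt0.
  by rewrite -[X in _ < X]c_pi mulrC ltr_pM2l.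
have /eqP := sin_mul_sum_cos_odd x N.
rewrite (_ : 2 * N%:R * x = d%:~R * pi); last by rewrite /x; field.
by rewrite sin_intpi !mulf_eq0 pnatr_eq0 (negbTE (sin_neq0 x_in)) orbF => /eqP ->; rewrite mulr0.
Qed.

Lemma norm_cos_mean_le1 N d : (0 < N)%N -> `|cos_mean N d| <= 1.
Proof.
move=> N0; have N0' : (0 : R) < N%:R by rewrite ltr0n.
rewrite /cos_mean normrM normfV (gtr0_norm N0') ler_pdivrMl // mulr1.
apply: le_trans (ler_norm_sum _ _ _) _.
apply: le_trans (_ : \sum_(j < N) 1 <= _); first by apply: ler_sum => j _; exact: cos_max.
by rewrite sumr_const card_ord.
Qed.
End DiscreteOrthogonality.

Arguments node {R} N j.
Arguments cos_mean {R} N d.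

Section Eigenspace.
Variables (R : realType) (Phi : (int -> R) -> (int -> R)) (s : R).
Hypothesis Hmaps : forall v, linf v -> linf (Phi v).
Hypothesis Hlin : forall (c : R) v w, linf v -> linf w ->
  Phi (fun n => c * v n + w n) = (fun n => c * Phi v n + Phi w n).
Hypothesis Hcont : wstar_continuous Phi.
Hypothesis Htrig :
  forall t, 0 < t < pi -> eigenvector Phi s (cosseq t) /\ eigenvector Phi s (sinseq t).

Lemma eigenvector_cos_mean N m :
  eigenvector Phi s (fun n => cos_mean N (n - m)).
Proof.
pose c (j : nat) : R := N%:R^-1 * cos (m%:~R * node N j).
pose d (j : nat) : R := N%:R^-1 * sin (m%:~R * node N j).
pose f j n := c j * cosseq (node N j) n + (d j * sinseq (node N j) n + 0).
have -> : (fun n => cos_mean N (n - m)) = fun n => \sum_(j < N) f j n.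
  apply/funext => n; rewrite /cos_mean mulr_sumr; apply: eq_bigr => j _.
  by rewrite /f /c /d /cosseq /sinseq intrB mulrBl cosB; ring.
apply: (eigenvector_sum Hlin) => j /node_in /Htrig[eC eS].
by do 2!apply: eigenvector_comb => //; exact: eigenvector0.
Qed.

Lemma eigenvector_of_approx v (M : R) : linf v -> 0 <= M ->
  (forall K, exists w, eigenvector Phi s w /\ (forall m, `|w m - v m| <= M) /\
     (forall m, window K m -> w m = v m)) ->
  eigenvector Phi s v.
Proof.
move=> lv M0 approx; split => //; apply/funext => n; apply/eqP/negPn/negP => neq.
have eps0 : 0 < `|Phi v n - s * v n| by rewrite normr_gt0 subr_eq0.
have [K [eta [eta0 PhiK]]] := Phi_coord_continuous Hmaps Hcont n lv eps0 M0.
have [w [[lw Pw] [wM wK]]] := approx (K + `|n|.+1)%N.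
have wn : w n = v n by apply: wK; rewrite /window; lia.
have close m : window K m -> `|w m - v m| <= eta.
  by move=> mK; rewrite wK ?subrr ?normr0 ?ltW // (window_monotone _ mK) ?leq_addr.
by have := PhiK w lw wM close; rewrite Pw wn distrC ltxx.
Qed.

Lemma eigenvector_delta m : eigenvector Phi s (delta m).
Proof.
apply: (eigenvector_of_approx (linf_delta R m) (ler0n R 2)) => K.
pose N := (K + `|m|).+1.
exists (fun n => cos_mean N (n - m)); split; first exact: eigenvector_cos_mean.
split=> [n | n /andP[nK1 nK2]].
- apply: le_trans (ler_normB _ _) _.
  by have := @norm_cos_mean_le1 R N (n - m) (ltn0Sn _); have := norm_delta_le1 R m n; lra.
- by rewrite cos_mean_small ?subr_eq0 // /N; lia.
Qed.

Lemma eigenvector_of_delta v :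
  (forall m, eigenvector Phi s (delta m)) -> linf v -> eigenvector Phi s v.
Proof.
move=> Hdelta lv; have [B vB] := lv.
have B0 : 0 <= B := le_trans (normr_ge0 _) (vB 0).
apply: (eigenvector_of_approx lv B0) => K.
exists (fun n => if window K n then v n else 0); split; last first.
  split=> [n | n ->] //; case: ifP => _; first by rewrite subrr normr0.
  by rewrite sub0r normrN.
pose f (k : nat) n := v k%:Z * delta k%:Z n + (v (- k.+1%:Z) * delta (- k.+1%:Z) n + 0).
have -> : (fun n => if window K n then v n else 0) = fun n => \sum_(k < K) f k n.
  apply/funext => n; rewrite -pair_partial_delta; apply: eq_bigr => k _.
  by rewrite /f addr0 /delta ![_ == n]eq_sym.
apply: (eigenvector_sum Hlin) => k _.
by do 2!apply: eigenvector_comb => //; exact: eigenvector0.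
Qed.
End Eigenspace.

Theorem proposition2p2 (R : realType) (Phi : (int -> R) -> (int -> R))
  (Hmaps : forall v, linf v -> linf (Phi v))
  (Hlin : forall (c : R) v w, linf v -> linf w ->
     Phi (fun n => c * v n + w n) = (fun n => c * Phi v n + Phi w n))
  (Hshift : forall v, linf v -> Phi (bshift v) = bshift (Phi v))
  (Hcont : wstar_continuous Phi)
  (Hidem : forall v, linf v -> Phi (Phi v) = Phi v) :
  (forall v, linf v -> Phi v = v) \/ (forall v, linf v -> Phi v = (fun _ => 0)).
Proof.
have pi0 := @pi_gt0 R.
have pihalf_in : 0 < (pi : R) / 2 < pi by apply/andP; split; lra.
pose s := trig_eigenvalue Phi (pi / 2).
have Htrig t : 0 < t < pi ->
    eigenvector Phi s (cosseq t) /\ eigenvector Phi s (sinseq t).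
  move=> t_in; have [_ eig] := trig_eigenvalueP Hlin Hshift Hidem t_in.
  by rewrite /s -(trig_eigenvalue_const Hmaps Hlin Hshift Hcont Hidem t_in pihalf_in).
have Phi_scale v : linf v -> Phi v = fun n => s * v n.
  have Hdelta m : eigenvector Phi s (delta m) := eigenvector_delta Hmaps Hlin Hcont Htrig m.
  by move=> lv; have [] := eigenvector_of_delta Hmaps Hlin Hcont Hdelta lv.
have [[s0|s1] _] := trig_eigenvalueP Hlin Hshift Hidem pihalf_in; [right|left] => v lv;
  by rewrite Phi_scale // /s ?s0 ?s1; apply/funext => n; rewrite ?mul0r ?mul1r.
Qed.
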